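(* Let $A$ be a vector bundle over $M$, $X$ a vector field of degree $b-1$ on the graded manifold $A[1]$, and $B_X$ as defined below. Then for all $E_1,\dots,E_b\in\Gamma(A)$, $f\in C^\infty(M)$ and $1\le j\le b$: $B_X(E_1,\dots,fE_j,\dots,E_b)=f\,B_X(E_1,\dots,E_b)+(-1)^j\langle a_X(f),E_1\wedge\cdots\wedge\widehat{E_j}\wedge\cdots\wedge E_b\rangle E_j$.
   Context: $A[1]$ is the graded manifold with function algebra $C^\infty(A[1])=\Gamma(\wedge^\bullet A^\vee)$; a vector field of degree $d$ on $A[1]$ is a graded derivation of degree $d$ of $\Gamma(\wedge^\bullet A^\vee)$. For such $X$ of degree $b-1$, $a_X:C^\infty(M)\to\Gamma(\wedge^{b-1}A^\vee)$ and $\partial_X:\Gamma(A^\vee)\to\Gamma(\wedge^bA^\vee)$ denote the restrictions of $X$ (so $a_X$ is a derivation and $\partial_X(fE)=a_X(f)E+f\partial_X(E)$). The pairing $\langle\eta,X_1\wedge\cdots\wedge X_p\rangle=\eta(X_1,\dots,X_p)$ for $\eta\in\Gamma(\wedge^pA^\vee)$ (and $0$ if degrees differ). $B_X:\Gamma(A)^{\times b}\to\Gamma(A)$ is defined by $\langle W,B_X(E_1,\dots,E_b)\rangle=(-1)^{b-1}\big(\langle\partial_X W,E_1\wedge\cdots\wedge E_b\rangle-\sum_{i=1}^b(-1)^{b-i}\langle a_X\langle W,E_i\rangle,E_1\wedge\cdots\wedge\widehat{E_i}\wedge\cdots\wedge E_b\rangle\big)$ for all $W\in\Gamma(A^\vee)$.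 *)

From mathcomp Require Import all_boot all_algebra.
Set Implicit Arguments. Unset Strict Implicit. Unset Printing Implicit Defensive.
Import GRing.Theory.
Local Open Scope ring_scope.

(* A b-tuple of sections E_1,...,E_b is a function 'I_b -> V (0-based). *)

Definition upd (V : Type) (p : nat) (E : 'I_p -> V) (i : 'I_p) (v : V) : 'I_p -> V :=
  fun k => if k == i then v else E k.

(* E_1, ..., hat(E_j), ..., E_p : drop the j-th entry *)
Definition omit (V : Type) (p : nat) (E : 'I_p -> V) (j : 'I_p) : 'I_p.-1 -> V :=
  fun k => E (lift j k).

(* Gamma(A^vee): R-linear maps V -> R *)
Definition lin1 (R : comRingType) (V : lmodType R) (W : V -> R) : Prop :=
  forall (f : R) (v w : V), W (f *: v + w) = f * W v + W w.

(* Gamma(wedge^p A^vee): R-multilinear alternating maps; eta E is the pairing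
   <eta, E_1 /\ ... /\ E_p>. *)
Definition multilinear (R : comRingType) (V : lmodType R) (p : nat)
    (eta : ('I_p -> V) -> R) : Prop :=
  forall (E : 'I_p -> V) (i : 'I_p) (f : R) (v w : V),
    eta (upd E i (f *: v + w)) = f * eta (upd E i v) + eta (upd E i w).

Definition alternating (R : comRingType) (V : lmodType R) (p : nat)
    (eta : ('I_p -> V) -> R) : Prop :=
  forall (E : 'I_p -> V) (i k : 'I_p), i != k -> E i = E k -> eta E = 0.

Definition is_form (R : comRingType) (V : lmodType R) (p : nat)
    (eta : ('I_p -> V) -> R) : Prop :=
  multilinear eta /\ alternating eta.

(* a_X : C^oo(M) -> Gamma(wedge^(b-1) A^vee) is a derivation *)
Definition is_derivation (R : comRingType) (V : lmodType R) (p : nat)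
    (a : R -> ('I_p -> V) -> R) : Prop :=
  (forall f g E, a (f + g) E = a f E + a g E) /\
  (forall f g E, a (f * g) E = f * a g E + g * a f E).

(* The defining identity of B_X (b-ary bracket), tested against all W. *)
Definition is_BX (R : comRingType) (V : lmodType R) (b : nat)
    (aX : R -> ('I_b.-1 -> V) -> R) (dX : (V -> R) -> ('I_b -> V) -> R)
    (B : ('I_b -> V) -> V) : Prop :=
  forall (E : 'I_b -> V) (W : V -> R), lin1 W ->
    W (B E) = (-1) ^+ b.-1 *
      (dX W E - \sum_(i < b) (-1) ^+ (b - i.+1) * aX (W (E i)) (omit E i)).

(* Pairing the defining identity of B_X with an arbitrary W reduces the claim
   to scalar identities. Scaling the j-th argument by f scales ∂_X W and every
   term a_X⟨W, E_i⟩ with i ≠ j by f (these are C^∞(M)-multilinear in the E's),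
   while the j-th term a_X(f⟨W, E_j⟩) picks up the extra Leibniz summand
   ⟨W, E_j⟩ a_X(f), which enters with sign -(-1)^(b-1) (-1)^(b-j) = (-1)^j.
   Sections are separated by the W's. Indices are 0-based in the code, so
   the paper's (-1)^j is (-1)^(j+1) there. *)
From mathcomp Require Import all_boot all_algebra.
From Stdlib Require Import FunctionalExtensionality.
From mathcomp Require Import ring zify.
Set Implicit Arguments. Unset Strict Implicit.
Import GRing.Theory.
Local Open Scope ring_scope.

Section Tuples.
Variables (T : Type) (p : nat).
Implicit Types (E : 'I_p -> T) (v : T).

Lemma upd_id E k : upd E k (E k) = E.
Proof. by apply: functional_extensionality => x; rewrite /upd; case: eqP => [->|]. Qed.

Lemma omit_upd E j v : omit (upd E j v) j = omit E j.
Proof.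
apply: functional_extensionality => k.
by rewrite /omit /upd eq_sym (negbTE (neq_lift j k)).
Qed.

Lemma omit_upd_lift E i k v :
  omit (upd E (lift i k) v) i = upd (omit E i) k v.
Proof.
by apply: functional_extensionality => l; rewrite /omit /upd (inj_eq (@lift_inj _ i)).
Qed.

End Tuples.

Section LinearForms.
Variables (R : comRingType) (V : lmodType R).

Lemma lin1Z (W : V -> R) : lin1 W -> forall f v, W (f *: v) = f * W v.
Proof.
move=> linW f v.
have W0 : W 0 = 0.
  by apply: (addrI (W 0)); rewrite addr0 -{1}(mul1r (W 0)) -linW scaler0 addr0.
by rewrite -[f *: v]addr0 linW W0 addr0.
Qed.

Lemma lin1B (W : V -> R) : lin1 W -> forall v w, W (v - w) = W v - W w.
Proof. by move=> linW v w; rewrite addrC -scaleN1r linW mulN1r addrC. Qed.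

Lemma multilinear_updZ (p : nat) (eta : ('I_p -> V) -> R) :
  multilinear eta -> forall E k f, eta (upd E k (f *: E k)) = f * eta E.
Proof.
move=> mleta E k f.
have eta0 : eta (upd E k 0) = 0.
  apply: (addrI (eta (upd E k 0))).
  by rewrite addr0 -{1}(mul1r (eta _)) -mleta scaler0 addr0.
by rewrite -[f *: E k]addr0 mleta eta0 addr0 upd_id.
Qed.

End LinearForms.

Section DerivationTerms.
Variables (R : comRingType) (V : lmodType R) (b : nat).
Variable aX : R -> ('I_b.-1 -> V) -> R.
Hypothesis aX_multilinear : forall g, multilinear (aX g).
Hypothesis aX_leibniz : forall f g E, aX (f * g) E = f * aX g E + g * aX f E.
Variable W : V -> R.
Hypothesis linW : lin1 W.

Lemma aX_omit_updZ (E : 'I_b -> V) (f g : R) (i j : 'I_b) : i != j ->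
  aX g (omit (upd E j (f *: E j)) i) = f * aX g (omit E i).
Proof.
case: (unliftP i j) => [k ->|->] neq_ij; last by rewrite eqxx in neq_ij.
by rewrite omit_upd_lift multilinear_updZ.
Qed.

Lemma sum_aX_updZ (E : 'I_b -> V) (f : R) (j : 'I_b) :
  let E' := upd E j (f *: E j) in
  \sum_(i < b) (-1) ^+ (b - i.+1) * aX (W (E' i)) (omit E' i) =
    f * \sum_(i < b) (-1) ^+ (b - i.+1) * aX (W (E i)) (omit E i)
    + (-1) ^+ (b - j.+1) * (W (E j) * aX f (omit E j)).
Proof.
rewrite /= (bigD1 j) //= [in RHS](bigD1 j) //= /upd eqxx omit_upd.
rewrite lin1Z // aX_leibniz mulrDr addrAC mulrDr; congr (_ + _).
rewrite mulrCA big_distrr /=; congr (_ + _); apply: eq_bigr => i neq_ij.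
by rewrite (negbTE neq_ij) -/(upd E j _) aX_omit_updZ // mulrCA.
Qed.

End DerivationTerms.

Lemma signr_bracket (R : pzRingType) (b : nat) (j : 'I_b) :
  (-1) ^+ b.-1 * (-1) ^+ (b - j.+1) = (-1) ^+ j :> R.
Proof.
rewrite -exprD.
have -> : (b.-1 + (b - j.+1) = j + (b - j.+1).*2)%N by have := ltn_ord j; lia.
by rewrite exprD -mul2n exprM sqrrN expr1n expr1n mulr1.
Qed.

Theorem proposition14p2 (R : comRingType) (V : lmodType R) (b : nat)
    (aX : R -> ('I_b.-1 -> V) -> R) (dX : (V -> R) -> ('I_b -> V) -> R)
    (B : ('I_b -> V) -> V)
    (sep : forall v : V, (forall W : V -> R, lin1 W -> W v = 0) -> v = 0)
    (haX_form : forall f, is_form (aX f))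
    (haX : is_derivation aX)
    (hdX_form : forall W, lin1 W -> is_form (dX W))
    (hdX_leib : forall (f : R) (W : V -> R), lin1 W ->
       forall E, dX (fun v => f * W v) E =
         (* a_X(f) /\ W + f dX W, with (alpha/\W)(E) =
            sum_i (-1)^(b-1-i) alpha(E without i) W(E_i) *)
         \sum_(i < b) (-1) ^+ (b - i.+1) * aX f (omit E i) * W (E i)
         + f * dX W E)
    (hB : is_BX aX dX B) :
  forall (E : 'I_b -> V) (f : R) (j : 'I_b),
    B (upd E j (f *: E j)) =
      f *: B E + ((-1) ^+ j.+1 * aX f (omit E j)) *: E j.
Proof.
move=> E f j; apply/eqP; rewrite -subr_eq0; apply/eqP; apply: sep => W linW.
have aX_multilinear g : multilinear (aX g) by case: (haX_form g).
have dXW_multilinear : multilinear (dX W) by case: (hdX_form W linW).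
rewrite lin1B // linW (lin1Z linW) !hB // multilinear_updZ //.
rewrite (sum_aX_updZ aX_multilinear (proj2 haX) linW).
rewrite exprS -(signr_bracket _ j).
ring.
Qed.
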